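(* Extend the Thue–Morse sequence $t$ to all of $\mathbb{Z}$ by setting $t(n)=t(-1-n)$ for $n<0$, and define $f(i,j)=t(i+j)$ for all $i,j\in\mathbb{Z}$. Then the coloring $(f(i,j))_{i,j\in\mathbb{Z}}$ of $\mathbb{Z}\times\mathbb{Z}$ is frameless: there do not exist integers $m,n$ and integers $p,q\ge1$ such that $f(m,n+i)=f(m+p,n+i)$ for all $0\le i\le q$ and $f(m+j,n)=f(m+j,n+q)$ for all $0\le j\le p$.
   Context: The Thue–Morse sequence is $t(n)=$ (number of $1$ bits in the binary representation of $n$) mod $2$ for $n\ge0$. A picture frame in a coloring $f$ of $\mathbb{Z}\times\mathbb{Z}$ is a rectangular block $\{m,\dots,m+p\}\times\{n,\dots,n+q\}$ with $p,q\ge1$ whose first and last rows agree and whose first and last columns agree; $f$ is frameless if it contains no picture frame. *)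

From Stdlib Require Import ZArith.
Open Scope Z_scope.

Fixpoint pos_popcount (p : positive) : nat :=
  match p with
  | xH => 1%nat
  | xO q => pos_popcount q
  | xI q => S (pos_popcount q)
  end.

Definition popcount (n : N) : nat :=
  match n with
  | N0 => 0%nat
  | Npos p => pos_popcount p
  end.

Definition thue_morse (n : N) : nat := Nat.modulo (popcount n) 2.

Definition tZ (n : Z) : nat :=
  if n <? 0 then thue_morse (Z.to_N (-1 - n)) else thue_morse (Z.to_N n).

Definition f (i j : Z) : nat := tZ (i + j).

Definition picture_frame {C : Type} (g : Z -> Z -> C) (m n p q : Z) : Prop :=
  1 <= p /\ 1 <= q /\
  (forall i, 0 <= i <= q -> g m (n + i) = g (m + p) (n + i)) /\
  (forall j, 0 <= j <= p -> g (m + j) n = g (m + j) (n + q)).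

Definition frameless {C : Type} (g : Z -> Z -> C) : Prop :=
  ~ exists m n p q, picture_frame g m n p q.

(* Thue–Morse is overlap-free: no factor of the form a w a w a.  For the two-sided
   extension this is proved simultaneously for [tZ] and its variant [tZ_flip]
   (complemented on the negative half-line), each of which is the image of the
   other under the morphism 0 -> 01, 1 -> 10.  In such an image an overlap of odd
   period forces the whole window to alternate, which is impossible over an odd
   distance, and an overlap of period 2r descends to one of period r in the
   preimage.  A picture frame of f with sides p, q yields an overlap of tZ of
   period min(p, q) along an anti-diagonal. *)

From Stdlib Require Import ZArith Lia.
Open Scope Z_scope.

Definition binary (h : Z -> nat) : Prop := forall x, (h x < 2)%nat.

Definition tm_image (g h : Z -> nat) : Prop :=
  forall x, h (2 * x) = g x /\ h (2 * x + 1) = (1 - g x)%nat.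

Definition overlap (h : Z -> nat) (a p : Z) : Prop :=
  forall y, a <= y <= a + p -> h y = h (y + p).

Definition overlap_free (h : Z -> nat) : Prop :=
  forall a p, 1 <= p -> ~ overlap h a p.

Lemma binary_alternating_even_steps (h : Z -> nat) a :
  binary h -> forall k, 0 <= k ->
  (forall y, a <= y < a + 2 * k -> h y <> h (y + 1)) -> h (a + 2 * k) = h a.
Proof.
  intros hb k Hk. pattern k. apply natlike_ind; [| |exact Hk].
  - intros _. f_equal. lia.
  - clear k Hk. intros k Hk IH Halt.
    replace (a + 2 * Z.succ k) with (a + 2 * k + 1 + 1) by lia.
    pose proof (Halt (a + 2 * k) ltac:(lia)).
    pose proof (Halt (a + 2 * k + 1) ltac:(lia)).
    pose proof (hb (a + 2 * k)); pose proof (hb (a + 2 * k + 1));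
      pose proof (hb (a + 2 * k + 1 + 1)).
    rewrite <- IH by (intros y Hy; apply Halt; lia). lia.
Qed.

Section TmImage.
Variables g h : Z -> nat.
Hypothesis g_binary : binary g.
Hypothesis h_image : tm_image g h.

Lemma tm_image_binary : binary h.
Proof.
  intros y. destruct (Z.Even_or_Odd y) as [[x ->]|[x ->]];
    destruct (h_image x) as [Ev Od]; pose proof (g_binary x); lia.
Qed.

Lemma tm_image_pair_neq x : h (2 * x) <> h (2 * x + 1).
Proof. destruct (h_image x) as [-> ->]. pose proof (g_binary x). lia. Qed.

Lemma tm_image_no_overlap_odd a s : 0 <= s -> ~ overlap h a (2 * s + 1).
Proof.
  intros Hs Ov.
  assert (Halt : forall y, a <= y < a + (2 * s + 1) -> h y <> h (y + 1)).
  { intros y Hy. destruct (Z.Even_or_Odd y) as [[x ->]|[x ->]].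
    - apply tm_image_pair_neq.
    - (* an odd position is shifted by the odd period onto an even one *)
      rewrite (Ov (2 * x + 1)), (Ov (2 * x + 1 + 1)) by lia.
      replace (2 * x + 1 + (2 * s + 1)) with (2 * (x + s + 1)) by lia.
      replace (2 * x + 1 + 1 + (2 * s + 1)) with (2 * (x + s + 1) + 1) by lia.
      apply tm_image_pair_neq. }
  assert (Hmid : h (a + 2 * s) = h a).
  { apply binary_alternating_even_steps; [exact tm_image_binary | lia |].
    intros y Hy. apply Halt. lia. }
  apply (Halt (a + 2 * s)); [lia|].
  rewrite Hmid, (Ov a) by lia. f_equal. lia.
Qed.

Lemma tm_image_overlap_even a r : overlap h a (2 * r) -> exists b, overlap g b r.
Proof.
  intros Ov. destruct (Z.Even_or_Odd a) as [[b ->]|[b ->]]; exists b; intros x Hx.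
  - destruct (h_image x) as [<- _], (h_image (x + r)) as [<- _].
    replace (2 * (x + r)) with (2 * x + 2 * r) by lia. apply Ov. lia.
  - assert (E : h (2 * x + 1) = h (2 * (x + r) + 1)).
    { replace (2 * (x + r) + 1) with (2 * x + 1 + 2 * r) by lia. apply Ov. lia. }
    destruct (h_image x) as [_ Ex], (h_image (x + r)) as [_ Exr].
    pose proof (g_binary x); pose proof (g_binary (x + r)). lia.
Qed.

End TmImage.

Lemma mutual_tm_images_overlap_free g h :
  binary g -> binary h -> tm_image g h -> tm_image h g ->
  overlap_free g /\ overlap_free h.
Proof.
  intros gb hb gh hg.
  enough (H : forall p, 0 <= p -> forall a, 1 <= p -> ~ overlap g a p /\ ~ overlap h a p)
    by (split; intros a p Hp; apply (H p); lia).
  intros p Hp0. pattern p. apply Z_lt_induction; [|exact Hp0].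
  clear p Hp0. intros p IH a Hp.
  destruct (Z.Even_or_Odd p) as [[r ->]|[s ->]]; split.
  - intros Ov. destruct (tm_image_overlap_even h g hb hg a r Ov) as [b Hb].
    exact (proj2 (IH r ltac:(lia) b ltac:(lia)) Hb).
  - intros Ov. destruct (tm_image_overlap_even g h gb gh a r Ov) as [b Hb].
    exact (proj1 (IH r ltac:(lia) b ltac:(lia)) Hb).
  - apply (tm_image_no_overlap_odd h g hb hg). lia.
  - apply (tm_image_no_overlap_odd g h gb gh). lia.
Qed.

Lemma mod2_succ k : (S k mod 2 = 1 - k mod 2)%nat.
Proof.
  pose proof (Nat.div_mod_eq k 2); pose proof (Nat.div_mod_eq (S k) 2).
  pose proof (Nat.mod_upper_bound k 2); pose proof (Nat.mod_upper_bound (S k) 2).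
  lia.
Qed.

Lemma thue_morse_binary n : (thue_morse n < 2)%nat.
Proof. apply Nat.mod_upper_bound. lia. Qed.

Lemma thue_morse_double n : thue_morse (N.double n) = thue_morse n.
Proof. now destruct n. Qed.

Lemma thue_morse_succ_double n : thue_morse (N.succ_double n) = (1 - thue_morse n)%nat.
Proof. destruct n; [reflexivity|]. apply mod2_succ. Qed.

Lemma tZ_binary : binary tZ.
Proof. intros x. unfold tZ. destruct (x <? 0); apply thue_morse_binary. Qed.

Definition tZ_flip (x : Z) : nat := if x <? 0 then (1 - tZ x)%nat else tZ x.

Lemma tZ_flip_binary : binary tZ_flip.
Proof. intros x. unfold tZ_flip. pose proof (tZ_binary x). destruct (x <? 0); lia. Qed.

Lemma tm_image_tZ_flip_tZ : tm_image tZ_flip tZ.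
Proof.
  intros x. unfold tZ_flip, tZ.
  destruct (Z.ltb_spec x 0), (Z.ltb_spec (2 * x) 0), (Z.ltb_spec (2 * x + 1) 0);
    try lia.
  - replace (Z.to_N (-1 - (2 * x))) with (N.succ_double (Z.to_N (-1 - x))) by lia.
    replace (Z.to_N (-1 - (2 * x + 1))) with (N.double (Z.to_N (-1 - x))) by lia.
    rewrite thue_morse_succ_double, thue_morse_double.
    pose proof (thue_morse_binary (Z.to_N (-1 - x))). split; lia.
  - replace (Z.to_N (2 * x)) with (N.double (Z.to_N x)) by lia.
    replace (Z.to_N (2 * x + 1)) with (N.succ_double (Z.to_N x)) by lia.
    now rewrite thue_morse_double, thue_morse_succ_double.
Qed.

Lemma tm_image_tZ_tZ_flip : tm_image tZ tZ_flip.
Proof.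
  intros x. destruct (tm_image_tZ_flip_tZ x) as [Ev Od]. unfold tZ_flip in *.
  rewrite Ev, Od. pose proof (tZ_binary x).
  destruct (Z.ltb_spec x 0), (Z.ltb_spec (2 * x) 0), (Z.ltb_spec (2 * x + 1) 0);
    split; lia.
Qed.

Lemma tZ_overlap_free : overlap_free tZ.
Proof.
  apply (mutual_tm_images_overlap_free tZ tZ_flip tZ_binary tZ_flip_binary
           tm_image_tZ_tZ_flip tm_image_tZ_flip_tZ).
Qed.

Lemma overlap_of_frame_rows m n p q : p <= q ->
  (forall i, 0 <= i <= q -> f m (n + i) = f (m + p) (n + i)) -> overlap tZ (m + n) p.
Proof.
  intros Hpq Hrow y Hy. specialize (Hrow (y - (m + n)) ltac:(lia)). unfold f in Hrow.
  now replace (m + p + (n + (y - (m + n)))) with (y + p) in Hrow by lia;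
    replace (m + (n + (y - (m + n)))) with y in Hrow by lia.
Qed.

Lemma overlap_of_frame_columns m n p q : q <= p ->
  (forall j, 0 <= j <= p -> f (m + j) n = f (m + j) (n + q)) -> overlap tZ (m + n) q.
Proof.
  intros Hqp Hcol y Hy. specialize (Hcol (y - (m + n)) ltac:(lia)). unfold f in Hcol.
  now replace (m + (y - (m + n)) + (n + q)) with (y + q) in Hcol by lia;
    replace (m + (y - (m + n)) + n) with y in Hcol by lia.
Qed.

Theorem theorem2 :
  ~ exists m n p q : Z,
      (1 <= p)%Z /\ (1 <= q)%Z /\
      (forall i : Z, (0 <= i <= q)%Z -> f m (n + i)%Z = f (m + p)%Z (n + i)%Z) /\
      (forall j : Z, (0 <= j <= p)%Z -> f (m + j)%Z n = f (m + j)%Z (n + q)%Z).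
Proof.
  intros (m & n & p & q & Hp & Hq & Hrow & Hcol).
  destruct (Z_le_gt_dec p q) as [Hpq|Hqp].
  - exact (tZ_overlap_free (m + n) p Hp (overlap_of_frame_rows m n p q Hpq Hrow)).
  - apply (tZ_overlap_free (m + n) q Hq).
    apply (overlap_of_frame_columns m n p q); [lia | exact Hcol].
Qed.
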